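(* Let $G$ be a group with the unique root property. Let $\varphi_1:H_1\to H_1'$ and $\varphi_2:H_2\to H_2'$ be isomorphisms between subgroups of finite index in $G$. Suppose that $H_2$ is a normal subgroup of $G$ and that $\varphi_1|_{H_1\cap H_2}=\varphi_2|_{H_1\cap H_2}$. Then there exists an isomorphism $\varphi:H_1H_2\to H_1'H_2'$ with $\varphi|_{H_1}=\varphi_1$ and $\varphi|_{H_2}=\varphi_2$.
   Context: A group $G$ has the unique root property if for all $x,y\in G$ and every positive integer $n$, $x^n=y^n$ implies $x=y$. *)

From Stdlib Require Import List.
Import ListNotations.

Section GroupDefs.
Context {G : Type} (mul : G -> G -> G) (one : G) (inv : G -> G).

Definition is_group : Prop :=
  (forall x y z, mul x (mul y z) = mul (mul x y) z) /\
  (forall x, mul one x = x) /\ (forall x, mul x one = x) /\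
  (forall x, mul (inv x) x = one) /\ (forall x, mul x (inv x) = one).

Fixpoint gpow (x : G) (n : nat) : G :=
  match n with O => one | S k => mul x (gpow x k) end.

Definition unique_root_property : Prop :=
  forall (x y : G) (n : nat), 0 < n -> gpow x n = gpow y n -> x = y.

Definition is_subgroup (H : G -> Prop) : Prop :=
  H one /\ (forall x y, H x -> H y -> H (mul x y)) /\ (forall x, H x -> H (inv x)).

Definition finite_index (H : G -> Prop) : Prop :=
  exists s : list G, forall x : G, exists g, In g s /\ H (mul (inv g) x).

Definition is_normal (H : G -> Prop) : Prop :=
  forall g h, H h -> H (mul (mul g h) (inv g)).

Definition setmul (H K : G -> Prop) : G -> Prop :=
  fun x => exists h k, H h /\ K k /\ x = mul h k.

Definition is_iso_between (phi : G -> G) (A B : G -> Prop) : Prop :=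
  (forall x, A x -> B (phi x)) /\
  (forall x y, A x -> A y -> phi (mul x y) = mul (phi x) (phi y)) /\
  (forall x y, A x -> A y -> phi x = phi y -> x = y) /\
  (forall y, B y -> exists x, A x /\ phi x = y).
End GroupDefs.

(* Extend phi1 and phi2 to H1 H2 by (a b) |-> phi1 a * phi2 b.  Two facts about
   phi1 and phi2 make this a well-defined isomorphism, and both come from the
   same trick: by finite index some power x^m of any element lies in the
   intersection H1 ∩ H2, where phi1 and phi2 agree; an identity between m-th
   powers then descends to the elements themselves by the unique root property.
   The facts are: phi2 intertwines conjugation by k ∈ H1 with conjugation by
   phi1 k (this gives multiplicativity), and phi1 a = phi2 b forces a = b (this
   gives injectivity). *)
From Stdlib Require Import List Lia Classical ClassicalEpsilon.

Section Groups.
Context {G : Type} (mul : G -> G -> G) (one : G) (inv : G -> G).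
Hypothesis HG : is_group mul one inv.

Local Infix "·" := mul (at level 40, left associativity).
Local Notation "x ⁻¹" := (inv x) (at level 2, left associativity, format "x ⁻¹").
Local Notation pow := (gpow mul one).

Lemma mulA x y z : x · (y · z) = x · y · z.
Proof. apply HG. Qed.

Lemma mul1g x : one · x = x.
Proof. apply HG. Qed.

Lemma mulg1 x : x · one = x.
Proof. apply HG. Qed.

Lemma mulVg x : x⁻¹ · x = one.
Proof. apply HG. Qed.

Lemma mulgV x : x · x⁻¹ = one.
Proof. apply HG. Qed.

Lemma mulKg x y : x⁻¹ · (x · y) = y.
Proof. now rewrite mulA, mulVg, mul1g. Qed.

Lemma mulKVg x y : x · (x⁻¹ · y) = y.
Proof. now rewrite mulA, mulgV, mul1g. Qed.

Lemma mulgI a x y : a · x = a · y -> x = y.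
Proof. intros E. now rewrite <- (mulKg a x), E, mulKg. Qed.

Lemma mulIg a x y : x · a = y · a -> x = y.
Proof. intros E. now rewrite <- (mulg1 x), <- (mulgV a), mulA, E, <- mulA, mulgV, mulg1. Qed.

Lemma inv_unique x y : x · y = one -> x⁻¹ = y.
Proof. intros E. apply (mulgI x). now rewrite mulgV, E. Qed.

Lemma invgK x : x⁻¹⁻¹ = x.
Proof. apply inv_unique, mulVg. Qed.

Lemma invgM x y : (x · y)⁻¹ = y⁻¹ · x⁻¹.
Proof. apply inv_unique. now rewrite <- mulA, (mulA y), mulgV, mul1g, mulgV. Qed.

Lemma eq_mul_mul a b c d : a · b = c · d <-> c⁻¹ · a = d · b⁻¹.
Proof.
  split; intros E.
  - apply (mulgI c), (mulIg b). now rewrite mulKVg, <- !mulA, mulVg, mulg1.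
  - now rewrite <- (mulKVg c a), E, <- !mulA, mulVg, mulg1.
Qed.

Lemma gpowD x i j : pow x (i + j) = pow x i · pow x j.
Proof. induction i; simpl; [now rewrite mul1g | now rewrite IHi, mulA]. Qed.

Lemma gpow_conj k h m : pow (k⁻¹ · h · k) m = k⁻¹ · pow h m · k.
Proof.
  induction m; simpl.
  - now rewrite mulg1, mulVg.
  - now rewrite IHm, <- !mulA, mulKVg.
Qed.

Section Subgroup.
Variable H : G -> Prop.
Hypothesis sH : is_subgroup mul one inv H.

Lemma subgroup_pow x m : H x -> H (pow x m).
Proof. destruct sH as (H1 & HM & _). intros Hx; induction m; simpl; auto. Qed.

Lemma normal_conjV : is_normal mul inv H -> forall k h, H h -> H (k⁻¹ · h · k).
Proof. intros nH k h Hh. rewrite <- (invgK k) at 2. apply nH, Hh. Qed.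

Lemma coset_pow_collision g r i N :
  i < N -> H (r⁻¹ · pow g i) -> H (r⁻¹ · pow g N) -> H (pow g (N - i)).
Proof.
  intros lt_iN Hi HN.
  replace (pow g (N - i)) with ((r⁻¹ · pow g i)⁻¹ · (r⁻¹ · pow g N)).
  - destruct sH as (_ & HM & HV). auto.
  - replace N with (i + (N - i)) at 1 by lia.
    now rewrite invgM, invgK, gpowD, <- mulA, mulKVg, mulKg.
Qed.

(* Pigeonhole: among g^0, ..., g^n (n the number of coset representatives)
   two powers lie in the same left coset of H. *)
Lemma finite_index_pow : finite_index mul inv H -> forall g, exists m, 0 < m /\ H (pow g m).
Proof.
  intros [s Hs] g. apply NNPP; intros no_pow.
  assert (reps : forall N, exists l, length l = N /\ NoDup l /\ incl l s /\
            forall r, In r l -> exists i, i < N /\ H (r⁻¹ · pow g i)).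
  { induction N as [|N (l & len_l & nd_l & incl_l & rep_l)].
    - exists nil. repeat split; [constructor | intros r [] | intros r []].
    - destruct (Hs (pow g N)) as (r & in_r & Hr).
      exists (r :: l). repeat split.
      + simpl; congruence.
      + constructor; [intros in_rl | exact nd_l].
        destruct (rep_l r in_rl) as (i & lt_iN & Hi).
        apply no_pow. exists (N - i). split; [lia|].
        now apply (coset_pow_collision g r).
      + intros y [<-|in_y]; auto.
      + intros y [<-|in_y]; [exists N; auto|].
        destruct (rep_l y in_y) as (i & lt_iN & Hi). exists i; auto. }
  destruct (reps (S (length s))) as (l & len_l & nd_l & incl_l & _).
  pose proof (NoDup_incl_length nd_l incl_l). lia.
Qed.

Variable phi : G -> G.
Hypothesis phiM : forall x y, H x -> H y -> phi (x · y) = phi x · phi y.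

Lemma hom1 : phi one = one.
Proof. apply (mulgI (phi one)). rewrite <- phiM by apply sH. now rewrite mul1g, mulg1. Qed.

Lemma homV x : H x -> phi x⁻¹ = (phi x)⁻¹.
Proof.
  intros Hx. symmetry. apply inv_unique.
  destruct sH as (_ & _ & HV). now rewrite <- phiM, mulgV, hom1 by auto.
Qed.

Lemma hom_pow x m : H x -> phi (pow x m) = pow (phi x) m.
Proof.
  intros Hx. induction m; simpl; [apply hom1|].
  now rewrite phiM, IHm by (auto; apply subgroup_pow, Hx).
Qed.

End Subgroup.

Lemma iso_between_morph phi A B :
  is_iso_between mul phi A B -> forall x y, A x -> A y -> phi (x · y) = phi x · phi y.
Proof. intros (_ & M & _); exact M. Qed.

Section Amalgam.
Hypothesis Hroot : unique_root_property mul one.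
Variables H1 H1' H2 H2' : G -> Prop.
Hypotheses (sH1 : is_subgroup mul one inv H1) (sH2 : is_subgroup mul one inv H2).
Hypotheses (fH1 : finite_index mul inv H1) (fH2 : finite_index mul inv H2).
Hypothesis nH2 : is_normal mul inv H2.
Variables phi1 phi2 : G -> G.
Hypotheses (iso1 : is_iso_between mul phi1 H1 H1') (iso2 : is_iso_between mul phi2 H2 H2').
Hypothesis agree : forall x, H1 x -> H2 x -> phi1 x = phi2 x.

Let phi1M := iso_between_morph phi1 H1 H1' iso1.
Let phi2M := iso_between_morph phi2 H2 H2' iso2.
Let H2_conj := normal_conjV H2 nH2.

Lemma phi2_conj k h : H1 k -> H2 h -> phi2 (k⁻¹ · h · k) = (phi1 k)⁻¹ · phi2 h · phi1 k.
Proof.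
  intros Hk Hh.
  destruct (finite_index_pow H1 sH1 fH1 h) as (m & pos_m & Hhm).
  assert (Hhm2 : H2 (pow h m)) by now apply subgroup_pow.
  assert (Hconj : H1 (k⁻¹ · pow h m · k)).
  { destruct sH1 as (_ & HM & HV). auto. }
  apply (Hroot _ _ m pos_m).
  rewrite <- (hom_pow H2 sH2 phi2 phi2M) by now apply H2_conj.
  rewrite !gpow_conj, <- (hom_pow H2 sH2 phi2 phi2M h m Hh).
  rewrite <- (agree _ Hhm Hhm2), <- agree by auto using H2_conj.
  destruct sH1 as (_ & HM & HV).
  now rewrite !phi1M, (homV H1 sH1 phi1 phi1M k) by auto.
Qed.

Lemma phi1_phi2_inj a b : H1 a -> H2 b -> phi1 a = phi2 b -> a = b.
Proof.
  intros Ha Hb E. destruct (finite_index_pow H2 sH2 fH2 a) as (m & pos_m & Ham).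
  assert (Ham1 : H1 (pow a m)) by now apply subgroup_pow.
  apply (Hroot _ _ m pos_m). apply iso2; [exact Ham | now apply subgroup_pow |].
  rewrite <- (agree _ Ham1 Ham), (hom_pow H1 sH1 phi1 phi1M), E by exact Ha.
  now rewrite (hom_pow H2 sH2 phi2 phi2M).
Qed.

Lemma phi12_factor_eq a b c d : H1 a -> H2 b -> H1 c -> H2 d ->
  a · b = c · d -> phi1 a · phi2 b = phi1 c · phi2 d.
Proof.
  intros Ha Hb Hc Hd E. apply eq_mul_mul in E. apply eq_mul_mul.
  destruct sH1 as (_ & HM1 & HV1), sH2 as (_ & HM2 & HV2).
  rewrite <- (homV H1 sH1 phi1 phi1M), <- (homV H2 sH2 phi2 phi2M), <- phi1M, <- phi2M by auto.
  rewrite <- E. apply agree; [auto | rewrite E; auto].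
Qed.

(* Off H1 H2 the choice, and hence [amalgam], is arbitrary. *)
Definition factor_pair (g : G) : G * G :=
  epsilon (inhabits (one, one)) (fun p => H1 (fst p) /\ H2 (snd p) /\ g = fst p · snd p).

Definition amalgam (g : G) : G := phi1 (fst (factor_pair g)) · phi2 (snd (factor_pair g)).

Lemma amalgamE a b : H1 a -> H2 b -> amalgam (a · b) = phi1 a · phi2 b.
Proof.
  intros Ha Hb. unfold amalgam, factor_pair.
  destruct (epsilon_spec (inhabits (one, one))
              (fun p => H1 (fst p) /\ H2 (snd p) /\ a · b = fst p · snd p))
    as (Hp1 & Hp2 & Ep); [now exists (a, b) |].
  now apply phi12_factor_eq.
Qed.

Lemma amalgam_iso : is_iso_between mul amalgam (setmul mul H1 H2) (setmul mul H1' H2').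
Proof.
  destruct sH1 as (_ & HM1 & HV1), sH2 as (_ & HM2 & HV2).
  split; [|split; [|split]].
  - intros x (a & b & Ha & Hb & ->). rewrite amalgamE by auto.
    exists (phi1 a), (phi2 b). split; [apply iso1 | split; [apply iso2 |]]; auto.
  - intros x y (a & b & Ha & Hb & ->) (c & d & Hc & Hd & ->).
    replace (a · b · (c · d)) with (a · c · (c⁻¹ · b · c · d))
      by now rewrite <- !mulA, mulKVg.
    rewrite !amalgamE, phi1M, phi2M, phi2_conj by auto using H2_conj.
    now rewrite <- !mulA, mulKVg.
  - intros x y (a & b & Ha & Hb & ->) (c & d & Hc & Hd & ->).
    rewrite !amalgamE by auto. intros E. apply eq_mul_mul in E. apply eq_mul_mul.
    rewrite <- (homV H1 sH1 phi1 phi1M), <- (homV H2 sH2 phi2 phi2M), <- phi1M, <- phi2M in E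
      by auto.
    apply phi1_phi2_inj; auto.
  - intros y (a' & b' & Ha' & Hb' & ->).
    destruct (proj2 (proj2 (proj2 iso1)) a' Ha') as (a & Ha & <-).
    destruct (proj2 (proj2 (proj2 iso2)) b' Hb') as (b & Hb & <-).
    exists (a · b). split; [now exists a, b | now apply amalgamE].
Qed.

Lemma amalgam_H1 x : H1 x -> amalgam x = phi1 x.
Proof.
  intros Hx. rewrite <- (mulg1 x) at 1.
  rewrite amalgamE; [| exact Hx | apply sH2].
  now rewrite (hom1 H2 sH2 phi2 phi2M), mulg1.
Qed.

Lemma amalgam_H2 x : H2 x -> amalgam x = phi2 x.
Proof.
  intros Hx. rewrite <- (mul1g x) at 1.
  rewrite amalgamE; [| apply sH1 | exact Hx].
  now rewrite (hom1 H1 sH1 phi1 phi1M), mul1g.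
Qed.

End Amalgam.
End Groups.

Theorem lemma2p6 (G : Type) (mul : G -> G -> G) (one : G) (inv : G -> G)
  (HG : is_group mul one inv) (Hroot : unique_root_property mul one)
  (H1 H1' H2 H2' : G -> Prop)
  (sH1 : is_subgroup mul one inv H1) (sH1' : is_subgroup mul one inv H1')
  (sH2 : is_subgroup mul one inv H2) (sH2' : is_subgroup mul one inv H2')
  (fH1 : finite_index mul inv H1) (fH1' : finite_index mul inv H1')
  (fH2 : finite_index mul inv H2) (fH2' : finite_index mul inv H2')
  (phi1 phi2 : G -> G)
  (iso1 : is_iso_between mul phi1 H1 H1') (iso2 : is_iso_between mul phi2 H2 H2')
  (nH2 : is_normal mul inv H2)
  (agree : forall x, H1 x -> H2 x -> phi1 x = phi2 x) :
  exists phi : G -> G,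
    is_iso_between mul phi (setmul mul H1 H2) (setmul mul H1' H2') /\
    (forall x, H1 x -> phi x = phi1 x) /\
    (forall x, H2 x -> phi x = phi2 x).
Proof.
  exists (amalgam mul one H1 H2 phi1 phi2).
  split; [|split].
  - now apply (amalgam_iso mul one inv HG Hroot H1 H1' H2 H2').
  - intros x. now apply (amalgam_H1 mul one inv HG H1 H1' H2 H2').
  - intros x. now apply (amalgam_H2 mul one inv HG H1 H1' H2 H2').
Qed.
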